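(* Let $a<b$ and let $f:[a,b]\to\mathbb{R}$ be continuous. Define $$I_f(a,x)=\frac{1}{x-a}\int_a^x f(t)\,\mathrm{d}t\ (a<x\le b),\quad B_f(a,b)=\frac{b-a}{2}\,I_f(a,b),\quad J_f(a,b)=b\,I_f(a,b)-\frac{1}{b-a}\int_a^b t\,f(t)\,\mathrm{d}t.$$ Then there exists $\eta\in(a,b)$ such that $$f(\eta)=I_f(a,\eta)+\frac{6\,[B_f(a,b)-J_f(a,b)]}{(b-a)^2}(\eta-a).$$ *)

From Stdlib Require Import Reals Lra.
From Coquelicot Require Import Coquelicot.
Open Scope R_scope.

Definition If_ (f : R -> R) (a x : R) : R := / (x - a) * RInt f a x.

Definition Bf (f : R -> R) (a b : R) : R := (b - a) / 2 * If_ f a b.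

Definition Jf (f : R -> R) (a b : R) : R :=
  b * If_ f a b - / (b - a) * RInt (fun t => t * f t) a b.

Definition cont_on_closed (f : R -> R) (a b : R) : Prop :=
  forall x, a <= x <= b ->
    filterlim f (within (fun y => a <= y <= b) (locally x)) (locally (f x)).

(* Write F(x) = int_a^x f and M(x) = int_a^x t f(t) dt, and let c be the
   constant of the theorem.  The claim says that x |-> F(x)/(x-a) - c(x-a)
   has a critical point in (a,b), so by Rolle it suffices to find xi in (a,b)
   where it takes its value w at b, i.e. a root of F(x) - c(x-a)^2 - w(x-a).
   That polynomial perturbation of F has the primitive
   x F(x) - M(x) - c(x-a)^3/3 - w(x-a)^2/2, which vanishes at a, and the
   definition of c (through B_f - J_f) is exactly what makes it vanish at b;
   a first application of Rolle yields xi. *)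

From Stdlib Require Import Reals Lra.
From Coquelicot Require Import Coquelicot.
Open Scope R_scope.

Definition clamp (a b x : R) : R := Rmax a (Rmin b x).

Lemma clamp_in_interval (a b x : R) : a <= b -> a <= clamp a b x <= b.
Proof. intros. unfold clamp, Rmax, Rmin. repeat destruct Rle_dec; lra. Qed.

Lemma clamp_id (a b x : R) : a <= x <= b -> clamp a b x = x.
Proof. intros. unfold clamp, Rmax, Rmin. repeat destruct Rle_dec; lra. Qed.

Lemma clamp_1_lipschitz (a b x y : R) :
  a <= b -> Rabs (clamp a b y - clamp a b x) <= Rabs (y - x).
Proof.
  intros. unfold clamp, Rmax, Rmin.
  repeat destruct Rle_dec; unfold Rabs; repeat destruct Rcase_abs; lra.
Qed.

Lemma continuous_clamp (a b x : R) : a <= b -> continuous (clamp a b) x.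
Proof.
  intros Hab. apply filterlim_locally. intros eps. exists eps. intros y Hy.
  exact (Rle_lt_trans _ _ _ (clamp_1_lipschitz a b x y Hab) Hy).
Qed.

Lemma cont_on_closed_extension (f : R -> R) (a b : R) :
  a <= b -> cont_on_closed f a b ->
  exists g : R -> R,
    (forall x, continuous g x) /\ (forall x, a <= x <= b -> g x = f x).
Proof.
  intros Hab Hf. exists (fun y => f (clamp a b y)). split.
  - intros x P HP.
    pose proof (clamp_in_interval a b x Hab) as Hx.
    pose proof (continuous_clamp a b x Hab _ (Hf _ Hx P HP)) as HC.
    unfold filtermap in *. eapply filter_imp; [| exact HC].
    intros y Hy. apply Hy, clamp_in_interval, Hab.
  - intros x Hx. now rewrite clamp_id.
Qed.

Lemma rolle_is_derive (h dh : R -> R) (l r : R) :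
  l < r -> (forall x, l <= x <= r -> is_derive h x (dh x)) -> h l = h r ->
  exists c, l < c < r /\ dh c = 0.
Proof.
  intros Hlr Hd Heq.
  assert (pr : forall x, l < x < r -> derivable_pt h x).
  { intros x Hx. apply ex_derive_Reals_0. exists (dh x). apply Hd. lra. }
  destruct (Rolle h l r pr) as [c [Pc Hc]]; auto.
  - intros x Hx. apply derivable_continuous_pt, ex_derive_Reals_0.
    exists (dh x). apply Hd. lra.
  - exists c. split; auto. rewrite Derive_Reals in Hc.
    now rewrite (is_derive_unique _ _ _ (Hd c ltac:(lra))) in Hc.
Qed.

Section Integral_mean.

Variables (g : R -> R) (a : R).
Hypothesis g_cont : forall x, continuous g x.

Lemma is_derive_RInt_continuous (h : R -> R) (x : R) :
  (forall y, continuous h y) -> is_derive (RInt h a) x (h x).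
Proof.
  intros Hh. apply (is_derive_RInt h _ a); [| apply Hh].
  apply filter_forall. intros y. apply (RInt_correct h a y), ex_RInt_continuous.
  intros; apply Hh.
Qed.

Lemma is_derive_RInt_g (x : R) : is_derive (RInt g a) x (g x).
Proof. exact (is_derive_RInt_continuous g x g_cont). Qed.

Lemma is_derive_RInt_first_moment (x : R) :
  is_derive (RInt (fun t => t * g t) a) x (x * g x).
Proof.
  apply (is_derive_RInt_continuous (fun t => t * g t)). intros y.
  apply (continuous_mult (fun t => t) g); [apply continuous_id | apply g_cont].
Qed.

Lemma is_derive_iterated_RInt (x : R) :
  is_derive (fun x => x * RInt g a x - RInt (fun t => t * g t) a x) x
    (RInt g a x).
Proof.
  pose proof (is_derive_RInt_g x) as HF.
  pose proof (is_derive_RInt_first_moment x) as HM.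
  set (F := RInt g a) in *. set (M := RInt (fun t => t * g t) a) in *.
  auto_derive.
  - repeat split; [now exists (g x) | now exists (x * g x)].
  - rewrite (is_derive_unique (fun y : R => F y) _ _ HF),
      (is_derive_unique (fun y : R => M y) _ _ HM).
    ring.
Qed.

Lemma exists_RInt_eq_quadratic (b c w : R) :
  a < b ->
  b * RInt g a b - RInt (fun t => t * g t) a b
    = c * (b - a) ^ 3 / 3 + w * (b - a) ^ 2 / 2 ->
  exists xi, a < xi < b /\ RInt g a xi = c * (xi - a) ^ 2 + w * (xi - a).
Proof.
  intros Hab Hb.
  set (V := fun x => x * RInt g a x - RInt (fun t => t * g t) a x).
  destruct (rolle_is_derive
    (fun x => V x - c * (x - a) ^ 3 / 3 - w * (x - a) ^ 2 / 2)
    (fun x => RInt g a x - c * (x - a) ^ 2 - w * (x - a)) a b Hab)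
    as [xi [Hxi Exi]].
  - intros x _. pose proof (is_derive_iterated_RInt x) as HV.
    auto_derive; [now exists (RInt g a x) |].
    rewrite (is_derive_unique (fun y : R => V y) _ _ HV). field.
  - unfold V. rewrite !RInt_point, Hb. change (zero : R) with 0. field.
  - exists xi. split; [exact Hxi | lra].
Qed.

Lemma exists_mean_point (xi b c : R) :
  a < xi < b ->
  RInt g a xi / (xi - a) - c * (xi - a) = RInt g a b / (b - a) - c * (b - a) ->
  exists eta, xi < eta < b /\ g eta = RInt g a eta / (eta - a) + c * (eta - a).
Proof.
  intros Hxi Heq.
  destruct (rolle_is_derive (fun x => RInt g a x / (x - a) - c * (x - a))
    (fun x => (g x * (x - a) - RInt g a x) / (x - a) ^ 2 - c) xi b)
    as [eta [Heta Eeta]]; [lra | | exact Heq |].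
  - intros x Hx. pose proof (is_derive_RInt_g x) as HF.
    set (F := RInt g a) in *.
    auto_derive; [repeat split; [now exists (g x) | lra] |].
    rewrite (is_derive_unique (fun y : R => F y) _ _ HF). field. lra.
  - exists eta. split; [lra |].
    assert (Hc : c = (g eta * (eta - a) - RInt g a eta) / (eta - a) ^ 2) by lra.
    rewrite Hc. field. lra.
Qed.

Theorem exists_point_average_plus_linear (b : R) :
  a < b ->
  let c := 6 * ((b - a) / 2 * RInt g a b - b * RInt g a b
                + RInt (fun t => t * g t) a b) / (b - a) ^ 3 in
  exists eta, a < eta < b /\
    g eta = RInt g a eta / (eta - a) + c * (eta - a).
Proof.
  intros Hab c.
  set (w := RInt g a b / (b - a) - c * (b - a)).
  destruct (exists_RInt_eq_quadratic b c w Hab) as [xi [Hxi Exi]].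
  { unfold w, c. field. lra. }
  destruct (exists_mean_point xi b c Hxi) as [eta [Heta Eeta]].
  { fold w. rewrite Exi. field. lra. }
  exists eta. split; [lra | exact Eeta].
Qed.

End Integral_mean.

Lemma RInt_ext_closed (f g : R -> R) (a x : R) :
  a <= x -> (forall t, a <= t <= x -> g t = f t) -> RInt g a x = RInt f a x.
Proof.
  intros Hax Hgf. apply RInt_ext. intros t Ht.
  rewrite Rmin_left in Ht by lra. rewrite Rmax_right in Ht by lra.
  apply Hgf. lra.
Qed.

Theorem mainTheorem8 (a b : R) (f : R -> R) :
  a < b -> cont_on_closed f a b ->
  exists eta : R, a < eta < b /\
    f eta = If_ f a eta + 6 * (Bf f a b - Jf f a b) / (b - a) ^ 2 * (eta - a).
Proof.
  intros Hab Hf.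
  destruct (cont_on_closed_extension f a b (Rlt_le _ _ Hab) Hf)
    as [g [Hg Hgf]].
  assert (RInt_gf : forall x, a <= x <= b -> RInt g a x = RInt f a x).
  { intros x Hx. apply RInt_ext_closed; [lra | intros t Ht; apply Hgf; lra]. }
  assert (RInt_moment_gf :
    RInt (fun t => t * g t) a b = RInt (fun t => t * f t) a b).
  { apply RInt_ext_closed; [lra | intros t Ht; now rewrite Hgf]. }
  destruct (exists_point_average_plus_linear g a Hg b Hab) as [eta [Heta Eeta]].
  exists eta. split; [exact Heta |].
  rewrite <- Hgf, Eeta by lra.
  unfold Bf, Jf, If_.
  rewrite RInt_moment_gf, !RInt_gf; try lra.
  field. lra.
Qed.
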